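(* Let $\varphi\in\Phi$ be such that $\mathscr{L}_{\varphi}\neq\emptyset$. Then $\mathscr{L}_{\varphi}$ is uncountable. Moreover, for every non-empty open interval $J\subseteq\mathbb{R}$, the set $\mathscr{L}_{\varphi}^{\ast}\cap J$ is uncountable.
   Context: $\mathscr{L}$ is the set of Liouville numbers (real irrational $\zeta$ such that for every $\eta>0$ there are infinitely many rationals $y/x$, $x\geq1$, with $|\zeta-y/x|\leq x^{-\eta}$). For real $\alpha$, $\Vert\alpha\Vert$ is the distance from $\alpha$ to the nearest integer. $\Phi$ is the set of all non-decreasing functions $\varphi:\mathbb{R}_{\geq 2}\to\mathbb{R}_{\geq 2}$ with $\lim_{x\to\infty}\varphi(x)=\infty$. For $\varphi\in\Phi$, $\mathscr{L}_{\varphi}$ is the set of $\zeta\in\mathscr{L}$ such that for every positive integer $N$ there is an integer $q$ with $2\leq q\leq\varphi(N)$ and $-\log\Vert\zeta q\Vert/\log q\geq N$; $\mathscr{L}_{\varphi}^{\ast}\supseteq\mathscr{L}_{\varphi}$ is the set of $\zeta\in\mathscr{L}$ for which this condition holds for all $N\geq N_0(\zeta)$ (some $N_0$ depending on $\zeta$). *)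

From Stdlib Require Import Reals List.
From Coquelicot Require Import Rbar.
Open Scope R_scope.

Definition dist_nearest_int (a : R) : R :=
  Rmin (a - IZR (Int_part a)) (IZR (Int_part a) + 1 - a).

Definition infinite_set (S : R -> Prop) : Prop :=
  forall l : list R, exists r, S r /\ ~ In r l.

Definition irrational (z : R) : Prop :=
  forall (p : Z) (q : Z), q <> 0%Z -> z <> IZR p / IZR q.

Definition Liouville (z : R) : Prop :=
  irrational z /\
  forall eta : R, 0 < eta ->
    infinite_set (fun r => exists (y : Z) (x : nat), (1 <= x)%nat /\
       r = IZR y / INR x /\ Rabs (z - IZR y / INR x) <= Rpower (INR x) (- eta)).

(* The class Phi: non-decreasing phi : R_{>=2} -> R_{>=2} tending to infinity
   (modelled as a total function R -> R, constrained on [2, +oo)). *)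
Definition in_Phi (phi : R -> R) : Prop :=
  (forall x, 2 <= x -> 2 <= phi x) /\
  (forall x y, 2 <= x -> x <= y -> phi x <= phi y) /\
  (forall M : R, exists x0, 2 <= x0 /\ forall x, x0 <= x -> M <= phi x).

Definition good_at (phi : R -> R) (z : R) (N : nat) : Prop :=
  exists q : nat, (2 <= q)%nat /\ INR q <= phi (INR N) /\
    - ln (dist_nearest_int (z * INR q)) / ln (INR q) >= INR N.

Definition L_phi (phi : R -> R) (z : R) : Prop :=
  Liouville z /\ forall N : nat, (1 <= N)%nat -> good_at phi z N.

Definition L_phi_star (phi : R -> R) (z : R) : Prop :=
  Liouville z /\ exists N0 : nat, forall N : nat, (1 <= N)%nat -> (N0 <= N)%nat ->
    good_at phi z N.

Definition uncountable (S : R -> Prop) : Prop :=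
  ~ exists f : R -> nat, forall x y, S x -> S y -> f x = f y -> x = y.

(* Let z be in L_phi, with approximations |z q_N - p_N| <= q_N^-N and 2 <= q_N <= phi(N).
   As z is irrational, consecutive fractions p_L/q_L and p_(L+1)/q_(L+1) differ infinitely
   often, and then 1 <= |p_L q_(L+1) - p_(L+1) q_L| forces phi(L) or phi(L+1) to exceed
   D^L for any prescribed D: phi beats every exponential infinitely often.  Hence one can
   pick levels J_1 < J_2 < ... and, for each binary sequence s, set
     zeta_s = A_0/D_0 + sum_(k>=1) 1/D_k,   D_(k+1) = D_k (2 D_k^J_(k+1) + s_k),
   with D_(k+1) <= phi(J_(k+1)).  Then ||zeta_s D_k|| <= D_k^-J_(k+1) witnesses every level
   N between J_k and J_(k+1) as well as the Liouville property, distinct s give distinct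
   zeta_s, and choosing A_0/D_0 places all zeta_s in a prescribed interval. *)

From Stdlib Require Import Reals Lra Lia ZArith List.
From Stdlib Require Import Classical ClassicalEpsilon FunctionalExtensionality.
From Coquelicot Require Import Rbar.
Open Scope R_scope.

Lemma dist_nearest_int_le (a : R) (p : Z) : dist_nearest_int a <= Rabs (a - IZR p).
Proof.
  destruct (base_Int_part a) as [Hlo Hhi]. unfold dist_nearest_int.
  destruct (Z_le_gt_dec p (Int_part a)) as [Hp|Hp].
  - apply IZR_le in Hp. eapply Rle_trans; [apply Rmin_l|]. rewrite Rabs_right; lra.
  - assert (Hp' : (Int_part a + 1 <= p)%Z) by lia.
    apply IZR_le in Hp'. rewrite plus_IZR in Hp'.
    eapply Rle_trans; [apply Rmin_r|]. rewrite Rabs_left1; lra.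
Qed.

Lemma dist_nearest_int_attained (a : R) : exists p : Z, Rabs (a - IZR p) = dist_nearest_int a.
Proof.
  destruct (base_Int_part a) as [Hlo Hhi]. unfold dist_nearest_int.
  destruct (Rle_dec (a - IZR (Int_part a)) (IZR (Int_part a) + 1 - a)).
  - exists (Int_part a). rewrite Rmin_left by lra. rewrite Rabs_right; lra.
  - exists (Int_part a + 1)%Z. rewrite Rmin_right by lra. rewrite plus_IZR.
    rewrite Rabs_left1; lra.
Qed.

Lemma dist_nearest_int_pos (a : R) : (forall p : Z, a <> IZR p) -> 0 < dist_nearest_int a.
Proof.
  intros Hnot. destruct (base_Int_part a) as [Hlo Hhi]. unfold dist_nearest_int.
  assert (IZR (Int_part a) <> a) by (intros E; apply (Hnot (Int_part a)); auto).
  apply Rmin_glb_lt; lra.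
Qed.

Lemma ln_le_iff (x y : R) : 0 < x -> 0 < y -> ln x <= ln y <-> x <= y.
Proof.
  intros Hx Hy. split; intros H.
  - destruct (Rle_or_lt x y) as [|Hlt]; auto. apply ln_increasing in Hlt; lra.
  - destruct H as [Hlt|<-]; [left; apply ln_increasing|]; lra.
Qed.

Lemma log_ratio_ge_iff (d x : R) (N : nat) : 0 < d -> 1 < x ->
  - ln d / ln x >= INR N <-> d <= / x ^ N.
Proof.
  intros Hd Hx.
  assert (Hlx : 0 < ln x) by (rewrite <- ln_1; apply ln_increasing; lra).
  assert (Hpow : 0 < x ^ N) by (apply pow_lt; lra).
  rewrite <- ln_le_iff, ln_Rinv, ln_pow by (auto; try apply Rinv_0_lt_compat; lra).
  unfold Rdiv. split; intros H.
  - apply Rge_le, (Rmult_le_compat_r (ln x)) in H; [|lra].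
    rewrite Rmult_assoc, Rinv_l in H; lra.
  - apply Rle_ge, (Rmult_le_reg_r (ln x)); auto.
    rewrite Rmult_assoc, Rinv_l; lra.
Qed.

Lemma good_at_of_dist_le (phi : R -> R) (z : R) (N q : nat) :
  (2 <= q)%nat -> INR q <= phi (INR N) ->
  0 < dist_nearest_int (z * INR q) -> dist_nearest_int (z * INR q) <= / INR q ^ N ->
  good_at phi z N.
Proof.
  intros Hq Hphi Hpos Hle. exists q. repeat split; auto.
  apply log_ratio_ge_iff; auto. apply (lt_INR 1). lia.
Qed.

Lemma approx_of_good_at (phi : R -> R) (z : R) (N : nat) : good_at phi z N ->
  exists (q : nat) (p : Z), (2 <= q)%nat /\ INR q <= phi (INR N) /\
    Rabs (z * INR q - IZR p) <= / INR q ^ N.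
Proof.
  intros (q & Hq & Hphi & Hlog). destruct (dist_nearest_int_attained (z * INR q)) as [p Hp].
  exists q, p. repeat split; auto. rewrite Hp.
  assert (Hq1 : 1 < INR q) by (apply (lt_INR 1); lia).
  destruct (Rabs_pos (z * INR q - IZR p)) as [Hpos|Hzero]; rewrite Hp in *.
  - apply (log_ratio_ge_iff _ _ N Hpos Hq1), Hlog.
  - rewrite <- Hzero. left. apply Rinv_0_lt_compat, pow_lt. lra.
Qed.

Lemma inv_pow_le_inv_pow2 (x : R) (n : nat) : 2 <= x -> / x ^ n <= / 2 ^ n.
Proof.
  intros Hx. apply Rinv_le_contravar; [apply pow_lt; lra|]. apply pow_incr; lra.
Qed.

Lemma inv_pow2_eventually_lt (eps : R) : 0 < eps ->
  exists n0, forall n, (n0 <= n)%nat -> / 2 ^ n < eps.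
Proof.
  intros Heps. destruct (pow_lt_1_zero (/ 2)) with (y := eps) as [n0 Hn0]; auto.
  { rewrite Rabs_right; lra. }
  exists n0. intros n Hn. specialize (Hn0 n Hn).
  rewrite pow_inv, Rabs_right in Hn0; auto.
  left. apply Rinv_0_lt_compat, pow_lt. lra.
Qed.

Lemma eq_of_dist_le_inv_pow2 (x y : R) (n0 : nat) :
  (forall n, (n0 <= n)%nat -> Rabs (x - y) <= / 2 ^ n) -> x = y.
Proof.
  intros Hle. destruct (Req_dec x y) as [|Hne]; auto.
  assert (Hpos : 0 < Rabs (x - y)) by (apply Rabs_pos_lt; lra).
  destruct (inv_pow2_eventually_lt _ Hpos) as [n1 Hn1].
  specialize (Hle (max n0 n1) ltac:(lia)). specialize (Hn1 (max n0 n1) ltac:(lia)). lra.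
Qed.

Lemma irrational_mul_nat_not_int (z : R) (q : nat) (p : Z) :
  irrational z -> (1 <= q)%nat -> z * INR q <> IZR p.
Proof.
  intros Hirr Hq E. apply (Hirr p (Z.of_nat q)); [lia|].
  rewrite <- INR_IZR_INZ, <- E. field. apply not_0_INR. lia.
Qed.

(** * Growth of phi forced by an element of L_phi *)

Section Growth.
Variables (phi : R -> R) (z : R) (q : nat -> nat) (p : nat -> Z).
Hypothesis z_irrational : irrational z.
Hypothesis q_ge2 : forall N, (1 <= N)%nat -> (2 <= q N)%nat.
Hypothesis q_le_phi : forall N, (1 <= N)%nat -> INR (q N) <= phi (INR N).
Hypothesis q_approx : forall N, (1 <= N)%nat ->
  Rabs (z * INR (q N) - IZR (p N)) <= / INR (q N) ^ N.

Lemma q_ge2_R N : (1 <= N)%nat -> 2 <= INR (q N).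
Proof. intros HN. apply (le_INR 2), q_ge2, HN. Qed.

Lemma q_eventually_ne (q0 : nat) : (1 <= q0)%nat ->
  exists L0, forall L, (L0 <= L)%nat -> (1 <= L)%nat -> q L <> q0.
Proof.
  intros Hq0.
  assert (Hc : 0 < dist_nearest_int (z * INR q0)).
  { apply dist_nearest_int_pos. intros p0. apply irrational_mul_nat_not_int; auto. }
  destruct (inv_pow2_eventually_lt _ Hc) as [L0 HL0]. exists L0. intros L HL HL1 E.
  pose proof (dist_nearest_int_le (z * INR q0) (p L)).
  pose proof (q_approx L HL1) as Happ.
  pose proof (inv_pow_le_inv_pow2 (INR (q L)) L (q_ge2_R L HL1)).
  rewrite E in *. specialize (HL0 L HL). lra.
Qed.

Lemma q_eventually_gt (D : nat) :
  exists L0, forall L, (L0 <= L)%nat -> (1 <= L)%nat -> (D < q L)%nat.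
Proof.
  induction D as [|D [L1 H1]].
  - exists 0%nat. intros L _ HL. pose proof (q_ge2 L HL). lia.
  - destruct (q_eventually_ne (S D) ltac:(lia)) as [L2 H2].
    exists (max L1 L2). intros L HL HL1.
    specialize (H1 L ltac:(lia) HL1). specialize (H2 L ltac:(lia) HL1). lia.
Qed.

Lemma approximants_change (L0 : nat) : exists L, (L0 <= L)%nat /\ (1 <= L)%nat /\
  (p L * Z.of_nat (q (S L)) <> p (S L) * Z.of_nat (q L))%Z.
Proof.
  apply NNPP. intros Hnone.
  set (L1 := max L0 1).
  set (f := IZR (p L1) / INR (q L1)).
  assert (Hconst : forall n, IZR (p (n + L1)) / INR (q (n + L1)) = f).
  { induction n as [|n IH]; [reflexivity|]. rewrite <- IH.
    assert (Hcross : (p (n + L1) * Z.of_nat (q (S (n + L1))) =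
                      p (S (n + L1)) * Z.of_nat (q (n + L1)))%Z).
    { apply NNPP. intros Hne. apply Hnone. exists (n + L1)%nat. split; [lia|]. split; [lia|auto]. }
    apply (f_equal IZR) in Hcross. rewrite !mult_IZR, <- !INR_IZR_INZ in Hcross.
    pose proof (q_ge2_R (n + L1) ltac:(lia)). pose proof (q_ge2_R (S (n + L1)) ltac:(lia)).
    simpl. field_simplify_eq; lra. }
  assert (Hclose : forall n, (L1 <= n)%nat -> Rabs (z - f) <= / 2 ^ n).
  { intros n Hn. replace n with (n - L1 + L1)%nat by lia. rewrite <- (Hconst (n - L1)%nat).
    set (L := (n - L1 + L1)%nat).
    pose proof (q_ge2_R L ltac:(lia)) as Hq2. pose proof (q_approx L ltac:(lia)) as Happ.
    pose proof (inv_pow_le_inv_pow2 _ L Hq2).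
    replace (z - IZR (p L) / INR (q L)) with ((z * INR (q L) - IZR (p L)) * / INR (q L))
      by (field; lra).
    rewrite Rabs_mult, (Rabs_right (/ _)) by (left; apply Rinv_0_lt_compat; lra).
    assert (/ INR (q L) <= 1) by (rewrite <- Rinv_1; apply Rinv_le_contravar; lra).
    pose proof (Rabs_pos (z * INR (q L) - IZR (p L))). nra. }
  apply (irrational_mul_nat_not_int z (q L1) (p L1) z_irrational ltac:(pose proof (q_ge2 L1); lia)).
  rewrite (eq_of_dist_le_inv_pow2 _ _ _ Hclose). unfold f.
  field. pose proof (q_ge2_R L1 ltac:(lia)). lra.
Qed.

Lemma distinct_approximants_bound (L : nat) : (1 <= L)%nat ->
  (p L * Z.of_nat (q (S L)) <> p (S L) * Z.of_nat (q L))%Z ->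
  1 <= INR (q (S L)) * / INR (q L) ^ L + INR (q L) * / INR (q (S L)) ^ S L.
Proof.
  intros HL Hne.
  pose proof (q_ge2_R L HL). pose proof (q_ge2_R (S L) ltac:(lia)).
  pose proof (q_approx L HL). pose proof (q_approx (S L) ltac:(lia)).
  set (b := INR (q L)) in *. set (d := INR (q (S L))) in *.
  set (a := IZR (p L)) in *. set (c := IZR (p (S L))) in *.
  assert (Hone : 1 <= Rabs (a * d - c * b)).
  { unfold a, b, c, d. rewrite !INR_IZR_INZ, <- !mult_IZR, <- minus_IZR, <- abs_IZR.
    apply IZR_le. lia. }
  replace (a * d - c * b) with (- d * (z * b - a) + b * (z * d - c)) in Hone by ring.
  eapply Rle_trans; [apply Hone|]. eapply Rle_trans; [apply Rabs_triang|].
  rewrite !Rabs_mult, Rabs_Ropp, (Rabs_right d), (Rabs_right b) by lra.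
  apply Rplus_le_compat; apply Rmult_le_compat_l; lra.
Qed.

Lemma phi_exponential_often (D : nat) : (1 <= D)%nat -> forall L0 : nat,
  exists L, (L0 <= L)%nat /\ INR D ^ L <= 2 * INR D * phi (INR L).
Proof.
  intros HD L0. destruct (q_eventually_gt D) as [L1 H1].
  destruct (approximants_change (max L0 L1)) as (L & HL & HL1 & Hne).
  pose proof (distinct_approximants_bound L HL1 Hne) as Hsum.
  pose proof (H1 L ltac:(lia) HL1). pose proof (H1 (S L) ltac:(lia) ltac:(lia)).
  pose proof (q_le_phi L HL1). pose proof (q_le_phi (S L) ltac:(lia)).
  pose proof (q_ge2_R L HL1). pose proof (q_ge2_R (S L) ltac:(lia)).
  assert (HDb : INR D <= INR (q L)) by (apply le_INR; lia).
  assert (HDd : INR D <= INR (q (S L))) by (apply le_INR; lia).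
  assert (HD1 : 1 <= INR D) by (apply (le_INR 1); lia).
  set (b := INR (q L)) in *. set (d := INR (q (S L))) in *.
  assert (Hb : 0 < b ^ L) by (apply pow_lt; lra).
  assert (Hd : 0 < d ^ S L) by (apply pow_lt; lra).
  destruct (Rle_or_lt (1 / 2) (d * / b ^ L)) as [Hhalf|Hhalf].
  - exists (S L). split; [lia|].
    assert (b ^ L <= 2 * d).
    { apply (Rmult_le_compat_r (b ^ L)) in Hhalf; [|lra].
      rewrite Rmult_assoc, Rinv_l in Hhalf; lra. }
    assert (INR D ^ L <= b ^ L) by (apply pow_incr; lra).
    simpl pow. nra.
  - exists L. split; [lia|].
    assert (Hhalf' : 1 / 2 <= b * / d ^ S L) by lra.
    assert (d ^ S L <= 2 * b).
    { apply (Rmult_le_compat_r (d ^ S L)) in Hhalf'; [|lra].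
      rewrite Rmult_assoc, Rinv_l in Hhalf'; lra. }
    assert (INR D ^ S L <= d ^ S L) by (apply pow_incr; lra).
    assert (INR D ^ L <= INR D ^ S L) by (apply Rle_pow; auto).
    nra.
Qed.

Lemma phi_dominates_step (d j : nat) : (2 <= d)%nat ->
  exists L, (j < L)%nat /\ INR d * (2 * INR d ^ L + 1) <= phi (INR L).
Proof.
  intros Hd. destruct (phi_exponential_often (4 * d * d) ltac:(lia) (j + 3)) as [L [HL Hphi]].
  exists L. split; [lia|].
  assert (Hx : 2 <= INR d) by (apply (le_INR 2); lia).
  rewrite !mult_INR in Hphi. replace (INR 4) with 4 in Hphi by (simpl; lra).
  set (x := INR d) in *.
  rewrite !Rpow_mult_distr in Hphi.
  assert (H4 : 4 ^ 3 <= 4 ^ L) by (apply Rle_pow; lia || lra).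
  assert (Hx3 : x ^ 3 <= x ^ L) by (apply Rle_pow; lia || lra).
  assert (HxL : x <= x ^ L) by (rewrite <- (pow_1 x) at 1; apply Rle_pow; lia || lra).
  assert (Hprod : 0 < x ^ L) by (apply pow_lt; lra).
  simpl in H4, Hx3.
  nra.
Qed.

End Growth.

Lemma L_phi_approximations (phi : R -> R) (z : R) : L_phi phi z ->
  exists (q : nat -> nat) (p : nat -> Z),
    (forall N, (1 <= N)%nat -> (2 <= q N)%nat) /\
    (forall N, (1 <= N)%nat -> INR (q N) <= phi (INR N)) /\
    (forall N, (1 <= N)%nat -> Rabs (z * INR (q N) - IZR (p N)) <= / INR (q N) ^ N).
Proof.
  intros [_ Hgood].
  destruct (choice (fun N (qp : nat * Z) => (1 <= N)%nat ->
      (2 <= fst qp)%nat /\ INR (fst qp) <= phi (INR N) /\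
      Rabs (z * INR (fst qp) - IZR (snd qp)) <= / INR (fst qp) ^ N)) as [f Hf].
  { intros N. destruct (le_lt_dec 1 N) as [HN|HN].
    - destruct (approx_of_good_at phi z N (Hgood N HN)) as (q & p & Hqp).
      exists (q, p). auto.
    - exists (0%nat, 0%Z). lia. }
  exists (fun N => fst (f N)), (fun N => snd (f N)).
  repeat split; intros N HN; apply (Hf N HN).
Qed.

Lemma phi_step_function (phi : R -> R) (z : R) : L_phi phi z ->
  exists g : nat -> nat -> nat,
    (forall d j, (2 <= d)%nat -> (j < g d j)%nat) /\
    (forall d j, (2 <= d)%nat -> INR d * (2 * INR d ^ g d j + 1) <= phi (INR (g d j))).
Proof.
  intros Hz. pose proof Hz as [[Hirr _] _].
  destruct (L_phi_approximations phi z Hz) as (q & p & Hq2 & Hqphi & Happrox).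
  destruct (choice (fun dj L => (2 <= fst dj)%nat ->
      (snd dj < L)%nat /\ INR (fst dj) * (2 * INR (fst dj) ^ L + 1) <= phi (INR L)))
    as [f Hf].
  { intros [d j]. destruct (le_lt_dec 2 d) as [Hd|Hd].
    - destruct (phi_dominates_step phi z q p Hirr Hq2 Hqphi Happrox d j Hd) as [L HL].
      exists L. auto.
    - exists 0%nat. simpl. lia. }
  exists (fun d j => f (d, j)). split; intros d j Hd; apply (Hf (d, j) Hd).
Qed.

(** * A Cantor set of elements of L_phi *)

Lemma injective_seq_avoids_list (u : nat -> R) : (forall i j, u i = u j -> i = j) ->
  forall (l : list R) (K : nat), exists k, (K <= k)%nat /\ ~ In (u k) l.
Proof.
  intros Hinj l. induction l as [|x l IH]; intros K.
  - exists K. split; auto.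
  - destruct (IH K) as [k [Hk Hnotin]].
    destruct (Req_dec (u k) x) as [E|Hne].
    + destruct (IH (S k)) as [k' [Hk' Hnotin']]. exists k'. split; [lia|].
      intros [E'|E']; auto. rewrite <- E in E'. apply Hinj in E'. lia.
    + exists k. split; auto. intros [E'|E']; auto.
Qed.

Lemma increasing_nat_bracket (f : nat -> nat) : (forall k, (f k < f (S k))%nat) ->
  forall N, (f 0 <= N)%nat -> exists k, (f k <= N < f (S k))%nat.
Proof.
  intros Hf N. induction N as [|N IH]; intros HN.
  - exists 0%nat. specialize (Hf 0%nat). lia.
  - destruct (Nat.eq_dec (f 0%nat) (S N)) as [E|Hne].
    + exists 0%nat. specialize (Hf 0%nat). lia.
    + destruct (IH ltac:(lia)) as [k Hk].
      destruct (Nat.eq_dec (S N) (f (S k))) as [E|Hne'].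
      * exists (S k). specialize (Hf (S k)). lia.
      * exists k. lia.
Qed.

Lemma inv_add_inv_sq_lt (d m : R) : 1 <= d -> 0 < m ->
  / (d * (m + 1)) + / (d * (m + 1)) ^ 2 < / (d * m).
Proof.
  intros Hd Hm. set (E := d * (m + 1)).
  assert (HmE : m < E) by (unfold E; nra).
  assert (HE : 0 < m * E) by nra.
  replace (/ (d * m)) with (/ E + / (m * E)) by (unfold E; field; lra).
  apply Rplus_lt_compat_l, Rinv_lt_contravar; simpl.
  - apply Rmult_lt_0_compat; [exact HE|]. nra.
  - nra.
Qed.

(* Stage k stores D_k, the level J_k and A_k, so that A_k / D_k is the k-th partial sum
   of zeta_s; the starting stage is (D_0, 1, A_0). *)
Record stage := Stage { den : nat; level : nat; num : Z }.

Section Construction.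
Variable g : nat -> nat -> nat.
Hypothesis g_gt : forall d j, (2 <= d)%nat -> (j < g d j)%nat.
Variables (D0 : nat) (A0 : Z).
Hypothesis D0_ge2 : (2 <= D0)%nat.

Definition multiplier (c : stage) (b : bool) : nat :=
  (2 * den c ^ g (den c) (level c) + Nat.b2n b)%nat.

Definition next_stage (c : stage) (b : bool) : stage :=
  Stage (den c * multiplier c b) (g (den c) (level c)) (num c * Z.of_nat (multiplier c b) + 1).

Fixpoint stage_seq (s : nat -> bool) (k : nat) : stage :=
  match k with
  | O => Stage D0 1 A0
  | S k => next_stage (stage_seq s k) (s k)
  end.

Definition partial_sum (s : nat -> bool) (k : nat) : R :=
  IZR (num (stage_seq s k)) / INR (den (stage_seq s k)).

Definition zeta (s : nat -> bool) : R := epsilon (inhabits 0) (is_lub (EUn (partial_sum s))).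

Section Digits.
Variable s : nat -> bool.

Local Notation D k := (den (stage_seq s k)).
Local Notation J k := (level (stage_seq s k)).
Local Notation A k := (num (stage_seq s k)).
Local Notation M k := (multiplier (stage_seq s k) (s k)).
Local Notation S_ := (partial_sum s).

Lemma den_ge2 k : (2 <= D k)%nat.
Proof.
  induction k as [|k IH]; [exact D0_ge2|]. simpl. unfold multiplier.
  pose proof (Nat.pow_nonzero (D k) (g (D k) (J k)) ltac:(lia)). nia.
Qed.

Lemma den_ge2_R k : 2 <= INR (D k).
Proof. apply (le_INR 2), den_ge2. Qed.

Lemma level_lt k : (J k < J (S k))%nat.
Proof. apply g_gt, den_ge2. Qed.

Lemma level_ge k : (S k <= J k)%nat.
Proof. induction k as [|k IH]; [simpl; lia|]. pose proof (level_lt k). lia. Qed.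

Lemma den_S k : INR (D (S k)) = INR (D k) * INR (M k).
Proof. apply mult_INR. Qed.

Lemma multiplier_bounds k :
  2 * INR (D k) ^ J (S k) <= INR (M k) <= 2 * INR (D k) ^ J (S k) + 1.
Proof.
  unfold multiplier. simpl level. rewrite plus_INR, mult_INR, pow_INR.
  destruct (s k); simpl; lra.
Qed.

Lemma multiplier_ge k : 2 * INR (D k) <= INR (M k).
Proof.
  pose proof (multiplier_bounds k) as [HM _]. pose proof (den_ge2_R k).
  assert (INR (D k) <= INR (D k) ^ J (S k)).
  { rewrite <- (pow_1 (INR (D k))) at 1. apply Rle_pow; [lra|]. pose proof (level_ge (S k)). lia. }
  lra.
Qed.

Lemma partial_sum_S k : S_ (S k) = S_ k + / INR (D (S k)).
Proof.
  unfold partial_sum. rewrite den_S. simpl num.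
  rewrite plus_IZR, mult_IZR, <- INR_IZR_INZ.
  pose proof (den_ge2_R k). pose proof (multiplier_ge k). field. lra.
Qed.

Lemma partial_sum_lt_S k : S_ k < S_ (S k).
Proof.
  rewrite partial_sum_S. pose proof (den_ge2_R (S k)).
  assert (0 < / INR (D (S k))) by (apply Rinv_0_lt_compat; lra). lra.
Qed.

Lemma partial_sum_lt k l : (k < l)%nat -> S_ k < S_ l.
Proof.
  induction 1 as [|l _ IH]; [apply partial_sum_lt_S|].
  pose proof (partial_sum_lt_S l). lra.
Qed.

Lemma partial_sum_le k l : (k <= l)%nat -> S_ k <= S_ l.
Proof.
  intros Hkl. destruct (le_lt_eq_dec _ _ Hkl) as [H|<-]; [left; apply partial_sum_lt, H | lra].
Qed.

Lemma partial_sum_inj k l : S_ k = S_ l -> k = l.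
Proof.
  intros E. destruct (lt_eq_lt_dec k l) as [[H|H]|H]; auto;
    apply partial_sum_lt in H; lra.
Qed.

Lemma partial_sum_tail_le k l : (k <= l)%nat -> S_ l + / INR (D l) <= S_ k + / INR (D k).
Proof.
  induction 1 as [|l _ IH]; [lra|]. rewrite partial_sum_S, den_S.
  pose proof (den_ge2_R l). pose proof (multiplier_ge l).
  assert (/ (INR (D l) * INR (M l)) <= / INR (D l) * / 2).
  { rewrite <- Rinv_mult. apply Rinv_le_contravar; nra. }
  lra.
Qed.

Lemma zeta_is_lub : is_lub (EUn S_) (zeta s).
Proof.
  unfold zeta. apply epsilon_spec.
  assert (Hbound : bound (EUn S_)).
  { exists (S_ 0 + / INR (D 0)). apply Un_bound_imp. intros k.
    pose proof (partial_sum_tail_le 0 k ltac:(lia)). pose proof (den_ge2_R k).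
    assert (0 < / INR (D k)) by (apply Rinv_0_lt_compat; lra). lra. }
  destruct (completeness _ Hbound (EUn_noempty S_)) as [l Hl]. exists l. exact Hl.
Qed.

Lemma zeta_between k : S_ k <= zeta s <= S_ k + / INR (D k).
Proof.
  split; [apply zeta_is_lub, Un_in_EUn|].
  apply zeta_is_lub, Un_bound_imp. intros m. pose proof (den_ge2_R k).
  destruct (le_lt_dec k m) as [Hkm|Hmk].
  - pose proof (partial_sum_tail_le k m Hkm). pose proof (den_ge2_R m).
    assert (0 < / INR (D m)) by (apply Rinv_0_lt_compat; lra). lra.
  - pose proof (partial_sum_le m k ltac:(lia)).
    assert (0 < / INR (D k)) by (apply Rinv_0_lt_compat; lra). lra.
Qed.

Lemma zeta_scaled_gap k : 0 < zeta s * INR (D k) - IZR (A k) <= 2 / INR (M k).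
Proof.
  pose proof (zeta_between (S k)) as [Hlo Hhi].
  rewrite partial_sum_S, den_S in Hlo, Hhi.
  pose proof (den_ge2_R k). pose proof (multiplier_ge k).
  assert (0 < / (INR (D k) * INR (M k))) by (apply Rinv_0_lt_compat; nra).
  replace (zeta s * INR (D k) - IZR (A k)) with ((zeta s - S_ k) * INR (D k))
    by (unfold partial_sum; field; lra).
  split; [apply Rmult_lt_0_compat; lra|].
  replace (2 / INR (M k)) with (2 * / (INR (D k) * INR (M k)) * INR (D k)) by (field; lra).
  apply Rmult_le_compat_r; lra.
Qed.

Lemma two_div_multiplier_le k : 2 / INR (M k) <= / INR (D k) ^ J (S k).
Proof.
  pose proof (multiplier_bounds k) as [HM _]. pose proof (den_ge2_R k).
  assert (0 < INR (D k) ^ J (S k)) by (apply pow_lt; lra).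
  unfold Rdiv. rewrite <- (Rinv_inv 2), <- Rinv_mult.
  apply Rinv_le_contravar; lra.
Qed.

Lemma den_gt_index k : INR k < INR (D k).
Proof.
  induction k as [|k IH]; [pose proof (den_ge2_R 0); simpl in *; lra|].
  rewrite S_INR, den_S. pose proof (den_ge2_R k). pose proof (multiplier_ge k).
  assert (INR (D k) * 2 <= INR (D k) * INR (M k)) by (apply Rmult_le_compat_l; lra). lra.
Qed.

(* Were [zeta s = p / q], the integer [p D_k - q A_k = q (zeta s D_k - A_k)] would lie
   strictly between [0] and [1] in absolute value as soon as [D_k > |q|]. *)
Lemma zeta_irrational : irrational (zeta s).
Proof.
  intros p q Hq E.
  assert (Hqz : IZR q <> 0) by (apply not_0_IZR; auto).
  set (k := Z.abs_nat q).
  pose proof (zeta_scaled_gap k) as [Hx Hhi].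
  pose proof (den_gt_index k). pose proof (multiplier_ge k). pose proof (den_ge2_R k).
  assert (Hk : INR k = Rabs (IZR q))
    by (unfold k; rewrite <- abs_IZR, INR_IZR_INZ; f_equal; f_equal; lia).
  set (x := zeta s * INR (D k) - IZR (A k)) in *.
  assert (Hint : IZR (p * Z.of_nat (D k) - q * A k) = IZR q * x).
  { rewrite minus_IZR, !mult_IZR, <- INR_IZR_INZ. unfold x. rewrite E. field. auto. }
  assert (HxM : x * INR (M k) <= 2).
  { apply (Rmult_le_compat_r (INR (M k))) in Hhi; [|lra].
    unfold Rdiv in Hhi. rewrite Rmult_assoc, Rinv_l in Hhi; lra. }
  assert (Hsmall : Rabs (IZR q * x) < 1) by (rewrite Rabs_mult, (Rabs_right x); nra).
  rewrite <- Hint, <- abs_IZR in Hsmall. apply lt_IZR in Hsmall.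
  assert (Hzero : (p * Z.of_nat (D k) - q * A k)%Z = 0%Z) by lia.
  rewrite Hzero in Hint.
  assert (IZR q * x <> 0) by (apply Rmult_integral_contrapositive; split; lra). lra.
Qed.

Lemma zeta_dist_nearest_int_le k N : (N <= J (S k))%nat ->
  dist_nearest_int (zeta s * INR (D k)) <= / INR (D k) ^ N.
Proof.
  intros HN. pose proof (zeta_scaled_gap k) as [Hpos Hhi].
  pose proof (two_div_multiplier_le k). pose proof (den_ge2_R k).
  eapply Rle_trans; [apply (dist_nearest_int_le _ (A k))|]. rewrite Rabs_right by lra.
  assert (/ INR (D k) ^ J (S k) <= / INR (D k) ^ N).
  { apply Rinv_le_contravar; [apply pow_lt; lra|]. apply Rle_pow; [lra | exact HN]. }
  lra.
Qed.

Lemma zeta_sub_partial_sum_le k : 0 <= zeta s - S_ k <= / INR (D k) ^ S (J (S k)).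
Proof.
  pose proof (zeta_scaled_gap k) as [Hpos Hhi]. pose proof (two_div_multiplier_le k).
  pose proof (den_ge2_R k).
  assert (0 < / INR (D k)) by (apply Rinv_0_lt_compat; lra).
  replace (zeta s - S_ k) with ((zeta s * INR (D k) - IZR (A k)) * / INR (D k))
    by (unfold partial_sum; field; lra).
  rewrite <- tech_pow_Rmult, Rinv_mult, Rmult_comm. split.
  - apply Rmult_le_pos; lra.
  - apply Rmult_le_compat_l; lra.
Qed.

Lemma zeta_liouville : Liouville (zeta s).
Proof.
  split; [apply zeta_irrational|]. intros eta Heta l.
  destruct (archimed eta) as [Hup _].
  set (K := Z.to_nat (up eta)).
  assert (HK : eta < INR K) by (unfold K; rewrite INR_IZR_INZ, Z2Nat.id; [lra|apply le_IZR; lra]).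
  destruct (injective_seq_avoids_list S_ partial_sum_inj l K) as [k [Hk Hnotin]].
  exists (S_ k). split; [|exact Hnotin].
  exists (A k), (D k). split; [pose proof (den_ge2 k); lia|]. split; [reflexivity|].
  pose proof (zeta_sub_partial_sum_le k) as [Hlo Hhi]. pose proof (den_ge2_R k).
  fold (S_ k). rewrite Rabs_right by lra. eapply Rle_trans; [exact Hhi|].
  rewrite Rpower_Ropp, <- Rpower_pow by lra.
  apply Rinv_le_contravar; [apply exp_pos|]. apply Rle_Rpower; [lra|].
  pose proof (level_ge (S k)). apply le_INR in Hk.
  assert (INR (S k) <= INR (J (S k))) by (apply le_INR; lia). rewrite S_INR in *. lra.
Qed.

Lemma zeta_in_window : IZR A0 / INR D0 < zeta s <= (IZR A0 + 1) / INR D0.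
Proof.
  pose proof (partial_sum_lt_S 0). pose proof (zeta_between 0) as [_ Hhi].
  pose proof (zeta_between 1) as [Hlo _]. pose proof (den_ge2_R 0).
  unfold partial_sum in *. simpl stage_seq in *. simpl den in *. simpl num in *.
  split; [lra|].
  replace ((IZR A0 + 1) / INR D0) with (IZR A0 / INR D0 + / INR D0) by (field; lra). exact Hhi.
Qed.

Lemma zeta_le_next k : zeta s <= S_ (S k) + / INR (D (S k)) ^ 2.
Proof.
  pose proof (zeta_between (S (S k))) as [_ Hhi].
  rewrite partial_sum_S, (den_S (S k)) in Hhi.
  pose proof (den_ge2_R (S k)). pose proof (multiplier_ge (S k)).
  set (d := INR (D (S k))) in *. set (m := INR (M (S k))) in *.
  assert (/ (d * m) <= / 2 * / d ^ 2).
  { rewrite <- Rinv_mult. apply Rinv_le_contravar; simpl; nra. }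
  lra.
Qed.

Variable phi : R -> R.
Hypothesis phi_mono : forall x y, 2 <= x -> x <= y -> phi x <= phi y.
Hypothesis g_phi : forall d j, (2 <= d)%nat ->
  INR d * (2 * INR d ^ g d j + 1) <= phi (INR (g d j)).

Lemma zeta_good_at_level k N : (N <= J (S k))%nat -> INR (D k) <= phi (INR N) ->
  good_at phi (zeta s) N.
Proof.
  intros HN Hphi. apply (good_at_of_dist_le _ _ _ (D k)); auto.
  - apply den_ge2.
  - apply dist_nearest_int_pos. intros p.
    apply irrational_mul_nat_not_int; [apply zeta_irrational | pose proof (den_ge2 k); lia].
  - apply zeta_dist_nearest_int_le, HN.
Qed.

Lemma den_le_phi k N : (J (S k) <= N)%nat -> INR (D (S k)) <= phi (INR N).
Proof.
  intros HN. rewrite den_S. pose proof (multiplier_bounds k) as [_ HM]. pose proof (den_ge2_R k).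
  eapply Rle_trans; [apply Rmult_le_compat_l, HM; lra|].
  eapply Rle_trans; [apply (g_phi (D k) (J k)), den_ge2|].
  apply phi_mono; [|apply le_INR, HN].
  apply (le_INR 2). pose proof (level_ge (S k)). simpl level in *. lia.
Qed.

Lemma zeta_good_at N : (1 <= N)%nat -> INR D0 <= phi (INR N) \/ (J 1 <= N)%nat ->
  good_at phi (zeta s) N.
Proof.
  intros HN Hcase.
  destruct (increasing_nat_bracket (fun k => J k) level_lt N HN) as [k Hk].
  apply (zeta_good_at_level k N); [lia|].
  destruct k as [|k].
  - destruct Hcase as [Hphi|HJ]; [exact Hphi | lia].
  - apply den_le_phi. lia.
Qed.

Lemma zeta_L_phi : (forall N, (1 <= N)%nat -> INR D0 <= phi (INR N)) -> L_phi phi (zeta s).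
Proof.
  intros HD0. split; [apply zeta_liouville|]. intros N HN. apply zeta_good_at; auto.
Qed.

Lemma zeta_L_phi_star : L_phi_star phi (zeta s).
Proof.
  split; [apply zeta_liouville|]. exists (J 1). intros N HN HJ. apply zeta_good_at; auto.
Qed.

End Digits.

(* Raising the multiplier M_k by one lowers 1/D_(k+1) by more than the whole remaining
   tail, which is at most 1/D_(k+1)^2. *)
Lemma zeta_lt_of_first_difference s t k :
  stage_seq s k = stage_seq t k -> s k = false -> t k = true -> zeta t < zeta s.
Proof.
  intros Hst Hs Ht.
  pose proof (zeta_between s (S k)) as [Hzs _]. pose proof (zeta_le_next t k) as Hzt.
  rewrite partial_sum_S in Hzs, Hzt.
  assert (Hsum : partial_sum s k = partial_sum t k)
    by (unfold partial_sum; rewrite Hst; reflexivity).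
  set (c := stage_seq t k) in *.
  assert (Hds : den (stage_seq s (S k)) = (den c * multiplier c false)%nat)
    by (simpl; rewrite Hst, Hs; reflexivity).
  assert (Hdt : den (stage_seq t (S k)) = (den c * (multiplier c false + 1))%nat)
    by (simpl; fold c; rewrite Ht; unfold multiplier; simpl; lia).
  rewrite Hds in Hzs. rewrite Hdt in Hzt. rewrite Hsum in Hzs.
  pose proof (den_ge2_R t k) as Hd. pose proof (multiplier_ge s k) as Hm.
  rewrite Hst, Hs in Hm. fold c in Hd, Hm.
  rewrite mult_INR in Hzs. rewrite mult_INR, plus_INR in Hzt.
  pose proof (inv_add_inv_sq_lt (INR (den c)) (INR (multiplier c false)) ltac:(lra) ltac:(lra)).
  change (INR 1) with 1 in Hzt. lra.
Qed.

Lemma zeta_injective s t : zeta s = zeta t -> s = t.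
Proof.
  intros Hz.
  assert (Hagree : forall k, stage_seq s k = stage_seq t k /\ s k = t k).
  { induction k as [|k [Hst Hbit]].
    - split; [reflexivity|].
      destruct (s 0%nat) eqn:Hs, (t 0%nat) eqn:Ht; auto; exfalso.
      + pose proof (zeta_lt_of_first_difference t s 0 eq_refl Ht Hs). lra.
      + pose proof (zeta_lt_of_first_difference s t 0 eq_refl Hs Ht). lra.
    - assert (Hst' : stage_seq s (S k) = stage_seq t (S k))
        by (simpl; rewrite Hst, Hbit; reflexivity).
      split; [exact Hst'|].
      destruct (s (S k)) eqn:Hs, (t (S k)) eqn:Ht; auto; exfalso.
      + pose proof (zeta_lt_of_first_difference t s (S k) (eq_sym Hst') Ht Hs). lra.
      + pose proof (zeta_lt_of_first_difference s t (S k) Hst' Hs Ht). lra. }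
  apply functional_extensionality. intros k. apply Hagree.
Qed.

End Construction.

Lemma no_injection_bool_seq_nat (F : (nat -> bool) -> nat) :
  ~ (forall s t, F s = F t -> s = t).
Proof.
  intros Hinj.
  set (h := fun n => epsilon (inhabits (fun _ : nat => false)) (fun s => F s = n)).
  set (diag := fun n => negb (h n n)).
  assert (Hh : h (F diag) = diag).
  { apply Hinj. apply (epsilon_spec (inhabits (fun _ : nat => false)) (fun s => F s = F diag)).
    exists diag. reflexivity. }
  assert (Hdiag : diag (F diag) = negb (h (F diag) (F diag))) by reflexivity.
  rewrite Hh in Hdiag. destruct (diag (F diag)); discriminate.
Qed.

Lemma uncountable_of_bool_seq_injection (P : R -> Prop) (f : (nat -> bool) -> R) :
  (forall s, P (f s)) -> (forall s t, f s = f t -> s = t) -> uncountable P.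
Proof.
  intros HP Hf [e He]. apply (no_injection_bool_seq_nat (fun s => e (f s))).
  intros s t E. apply Hf, He; auto.
Qed.

Lemma Rbar_lt_closed_subinterval (a b : Rbar) : Rbar_lt a b -> exists x y, x < y /\
  (forall w, x <= w -> Rbar_lt a w) /\ (forall w, w <= y -> Rbar_lt w b).
Proof.
  destruct a as [a| |], b as [b| |]; simpl; intros Hab; try contradiction.
  - exists ((2 * a + b) / 3), ((a + 2 * b) / 3). repeat split; intros; simpl; lra.
  - exists (a + 1), (a + 2). repeat split; intros; simpl; lra.
  - exists (b - 2), (b - 1). repeat split; intros; simpl; try lra; auto.
  - exists 0, 1. repeat split; intros; simpl; try lra; auto.
Qed.

Lemma rational_window (x y : R) : x < y -> exists (D0 : nat) (A0 : Z),
  (2 <= D0)%nat /\ x < IZR A0 / INR D0 /\ (IZR A0 + 1) / INR D0 <= y.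
Proof.
  intros Hxy. destruct (archimed (2 / (y - x))) as [HD _].
  set (D0 := (Z.to_nat (up (2 / (y - x))) + 2)%nat).
  assert (Hpos : 0 < 2 / (y - x)) by (apply Rdiv_lt_0_compat; lra).
  assert (HD0 : 2 / (y - x) < INR D0).
  { unfold D0. rewrite plus_INR, INR_IZR_INZ, Z2Nat.id by (apply le_IZR; lra). simpl. lra. }
  assert (HD0pos : 0 < INR D0) by lra.
  assert (Hwidth : 2 < (y - x) * INR D0).
  { apply (Rmult_lt_compat_l (y - x)) in HD0; [|lra].
    replace ((y - x) * (2 / (y - x))) with 2 in HD0 by (field; lra). lra. }
  destruct (archimed (x * INR D0)) as [Hlo Hhi].
  exists D0, (up (x * INR D0)). split; [unfold D0; lia|]. split.
  - apply (Rmult_lt_reg_r (INR D0)); auto. unfold Rdiv. rewrite Rmult_assoc, Rinv_l; lra.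
  - apply (Rmult_le_reg_r (INR D0)); auto. unfold Rdiv. rewrite Rmult_assoc, Rinv_l; lra.
Qed.

Lemma two_le_phi_of_L_phi (phi : R -> R) (z : R) : in_Phi phi -> L_phi phi z ->
  forall N, (1 <= N)%nat -> 2 <= phi (INR N).
Proof.
  intros [Hphi2 _] [_ Hgood] N HN. destruct (Nat.eq_dec N 1) as [->|Hne].
  - destruct (Hgood 1%nat ltac:(lia)) as (q & Hq & Hqphi & _).
    apply Rle_trans with (INR q); [apply (le_INR 2), Hq | exact Hqphi].
  - apply Hphi2, (le_INR 2). lia.
Qed.

Theorem proposition3p6 (phi : R -> R) :
  in_Phi phi ->
  (exists z, L_phi phi z) ->
  uncountable (L_phi phi) /\
  (forall a b : Rbar, Rbar_lt a b ->
     uncountable (fun z => L_phi_star phi z /\ Rbar_lt a (Finite z) /\ Rbar_lt (Finite z) b)).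
Proof.
  intros Hphi [z Hz]. pose proof Hphi as (_ & Hmono & _).
  destruct (phi_step_function phi z Hz) as (g & Hg_gt & Hg_phi).
  split.
  - apply (uncountable_of_bool_seq_injection _ (zeta g 2 0)).
    + intros s. apply (zeta_L_phi g Hg_gt 2 0 ltac:(lia) s phi Hmono Hg_phi).
      exact (two_le_phi_of_L_phi phi z Hphi Hz).
    + exact (zeta_injective g Hg_gt 2 0 ltac:(lia)).
  - intros a b Hab.
    destruct (Rbar_lt_closed_subinterval a b Hab) as (x & y & Hxy & Hxa & Hyb).
    destruct (rational_window x y Hxy) as (D0 & A0 & HD0 & Hx & Hy).
    apply (uncountable_of_bool_seq_injection _ (zeta g D0 A0)).
    + intros s. pose proof (zeta_in_window g Hg_gt D0 A0 HD0 s) as [Hlo Hhi].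
      split; [exact (zeta_L_phi_star g Hg_gt D0 A0 HD0 s phi Hmono Hg_phi)|].
      split; [apply Hxa | apply Hyb]; lra.
    + exact (zeta_injective g Hg_gt D0 A0 HD0).
Qed.
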